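(* Consider the subclass of SCMs in $\mathcal{M}$ that have a set of endogenous variables $Z$ such that $Y\perp\!\!\!\perp\{D,\Theta\}\mid X,Z$ and for which $\mathbb{P}(X,Z\mid\mathrm{do}(D=d,\Theta=\theta))\ll\mathbb{P}(X,Z\mid\mathrm{do}(D=d',\Theta=\theta'))$ for all $d,d',\theta,\theta'$. In this subclass: (T1) The deployment effect $\tau(\theta)$ is identifiable from $\{\mathbb{P}(X,Y,Z\mid\mathrm{do}(D=0)),\ \mathbb{P}(X,Z\mid\mathrm{do}(D=1,\Theta=\theta))\}$ via $$\tau(\theta)=\mathbb{E}\big[\mathbb{E}[Y\mid X,Z,\mathrm{do}(D=0)]\,\big|\,\mathrm{do}(D=1,\Theta=\theta)\big]-\mathbb{E}[Y\mid\mathrm{do}(D=0)],$$ and from $\{\mathbb{P}(X,Y,Z\mid\mathrm{do}(D=1,\Theta=\theta)),\ \mathbb{P}(X,Z\mid\mathrm{do}(D=0))\}$ via $$\tau(\theta)=\mathbb{E}[Y\mid\mathrm{do}(D=1,\Theta=\theta)]-\mathbb{E}\big[\mathbb{E}[Y\mid X,Z,\mathrm{do}(D=1,\Theta=\theta)]\,\big|\,\mathrm{do}(D=0)\big].$$ (T2) The retraining effect $\rho(\theta_{t+1},\theta_t)$ is identifiable from $\{\mathbb{P}(X,Y,Z\mid\mathrm{do}(D=1,\Theta=\theta_t)),\ \mathbb{P}(X,Z\mid\mathrm{do}(D=1,\Theta=\theta_{t+1}))\}$ via $$\rho(\theta_{t+1},\theta_t)=\mathbb{E}\big[\mathbb{E}[Y\mid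 X,Z,\mathrm{do}(D=1,\Theta=\theta_t)]\,\big|\,\mathrm{do}(D=1,\Theta=\theta_{t+1})\big]-\mathbb{E}[Y\mid\mathrm{do}(D=1,\Theta=\theta_t)].$$ (T3) The baseline predictor $\mathbb{E}[Y\mid X,\mathrm{do}(D=0)]$ is identifiable from $\{\mathbb{P}(X,Y,Z\mid\mathrm{do}(D=1,\Theta=\theta)),\ \mathbb{P}(X,Z\mid\mathrm{do}(D=0))\}$ via $$\mathbb{E}[Y\mid X,\mathrm{do}(D=0)]=\mathbb{E}\big[\mathbb{E}[Y\mid X,Z,\mathrm{do}(D=1,\Theta=\theta)]\,\big|\,X,\mathrm{do}(D=0)\big].$$
   Context: Setting: all variables take values in subsets of Euclidean spaces with Borel $\sigma$-algebras. Variables: features $X$ (possibly multidimensional), target $Y$ (real-valued), prediction $\hat{Y}$, and two input (non-random, externally set) variables: a domain indicator $D\in\{0,1\}$ ($D=0$: the decision support system is not deployed; $D=1$: it is deployed) and parameters $\Theta$. A structural causal model (SCM) with input variables $\{D,\Theta\}$ induces, for every value $(d,\theta)$, a distribution $\mathbb{P}(\cdot\mid\mathrm{do}(D=d,\Theta=\theta))$ on the endogenous variables, the push-forward of the independent exogenous distributions through the structural equations; $\mathbb{P}(\cdot\mid\mathrm{do}(D=0))$ denotes this distribution with $D=0$. The class $\mathcal{M}$: the set of SCMs with endogenous variables $V\supseteq\{X,\hat{Y},Y\}$, input variables $\{D,\Theta\}$, and graph $G$ such that the parents of $\hat{Y}$ are exactly $\{X,\Theta\}$, the children of $D$ equal the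 children of $\hat{Y}$, and the latent projection of $G$ onto $\{X,\hat{Y},Y,D,\Theta\}$ is a subgraph of the acyclic directed mixed graph with edges $X\to\hat{Y}$, $\Theta\to\hat{Y}$, $X\to Y$, $\hat{Y}\to Y$, $D\to Y$, $X\leftrightarrow Y$. Identifiability: a target quantity $t(M)$ is identifiable in a class from a set $s(M)$ of distributions induced by $M$ if $s(M_1)=s(M_2)\implies t(M_1)=t(M_2)$ for all $M_1,M_2$ in the class. Deployment effect: $\tau(\theta):=\mathbb{E}[Y\mid\mathrm{do}(D=1,\Theta=\theta)]-\mathbb{E}[Y\mid\mathrm{do}(D=0)]$. Retraining effect: $\rho(\theta_{t+1},\theta_t):=\mathbb{E}[Y\mid\mathrm{do}(D=1,\Theta=\theta_{t+1})]-\mathbb{E}[Y\mid\mathrm{do}(D=1,\Theta=\theta_t)]$. Baseline predictor: $\mathbb{E}[Y\mid X,\mathrm{do}(D=0)]$. The conditional independence $Y\perp\!\!\!\perp\{D,\Theta\}\mid X,Z$ between a random variable and input variables is meant in the transitional sense (e.g. implied by d-separation in the graph). $\ll$ denotes absolute continuity. *)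

From HB Require Import structures.
From mathcomp Require Import all_boot all_order all_algebra.
From mathcomp Require Import all_classical all_reals all_analysis.

Unset Printing Implicit Defensive.

Import Order.TTheory GRing.Theory Num.Theory.
Local Open Scope classical_set_scope.
Local Open Scope ring_scope.

(* Structural causal models with input variables D (domain indicator, a      *)
(* boolean: false = 0 = not deployed, true = 1 = deployed) and Theta.        *)
(* Every variable (endogenous, exogenous, and the input Theta) takes values  *)
(* in the Euclidean space R^m = m.-tuple R with its Borel (product)          *)
(* sigma-algebra; a variable with values in a subset of R^n (n <= m) is      *)
(* represented via the embedding of R^n into R^m.             *)

Section SCM_def.
Context (R : realType) (m : nat).

Definition Val := (m.-tuple R)%type.

Definition node (V U : finType) := ((V + U) + bool)%type.
Definition nEndo {V U : finType} (v : V) : node V U := inl (inl v).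
Definition nExo {V U : finType} (u : U) : node V U := inl (inr u).
Definition nD {V U : finType} : node V U := inr false.
Definition nTh {V U : finType} : node V U := inr true.

Record SCM := {
  Vn : finType;
  Un : finType;
  vX : Vn; vYh : Vn; vY : Vn;
  vX_Yh : vX != vYh; vX_Y : vX != vY; vYh_Y : vYh != vY;
  pa : node Vn Un -> Vn -> bool;
  acyclic : forall (v : Vn) (s : seq Vn), ~~ path (fun a b => pa (nEndo a) b) v (rcons s v);
  f : Vn -> (Vn -> Val) -> (Un -> Val) -> bool -> Val -> Val;
  f_local : forall v x x' u u' d d' th th',
      (forall w, pa (nEndo w) v -> x w = x' w) ->
      (forall w, pa (nExo w) v -> u w = u' w) ->
      (pa nD v -> d = d') -> (pa nTh v -> th = th') ->
      f v x u d th = f v x' u' d' th';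
  dOm : measure_display;
  Om : measurableType dOm;
  Pr : probability Om R;
  Uex : Un -> Om -> Val;
  Uex_meas : forall u, measurable_fun setT (Uex u);
  Uex_indep : forall A : Un -> set Val, (forall u, measurable (A u)) ->
      Pr (\bigcap_u (Uex u @^-1` A u)) = (\prod_(u : Un) Pr (Uex u @^-1` A u))%E;
  (* the (unique, by acyclicity) solution of the structural equations for    *)
  (* the intervention do(D = d, Theta = th)                                  *)
  sol : bool -> Val -> Om -> Vn -> Val;
  sol_eq : forall d th w v, sol d th w v = f v (sol d th w) (fun u => Uex u w) d th;
  sol_meas : forall d th v, measurable_fun setT (fun w => sol d th w v);
  (* Y is real-valued: it lives on the first coordinate axis of R^m *)
  Y_real : forall d th w, all (eq_op 0) (behead (sol d th w vY))
}.


Definition gedge (M : SCM) : rel (node (Vn M) (Un M)) :=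
  fun a b => match b with inl (inl v) => pa M a v | _ => false end.

Definition Obs (M : SCM) : pred (node (Vn M) (Un M)) :=
  fun a => [|| a == nEndo (vX M), a == nEndo (vYh M), a == nEndo (vY M),
              a == nD | a == nTh].

Definition lat (M : SCM) : pred (node (Vn M) (Un M)) := fun a => ~~ Obs M a.

(* latent projection of the graph onto {X, Yhat, Y, D, Theta} *)
Definition proj_dir (M : SCM) (a b : node (Vn M) (Un M)) : Prop :=
  Obs M a /\ Obs M b /\
  exists s, path (gedge M) a (rcons s b) && all (lat M) s.

Definition proj_bi (M : SCM) (a b : node (Vn M) (Un M)) : Prop :=
  Obs M a /\ Obs M b /\ a <> b /\
  exists c s1 s2, [&& lat M c, path (gedge M) c (rcons s1 a), all (lat M) s1,
                      path (gedge M) c (rcons s2 b) & all (lat M) s2].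

Definition inM (M : SCM) : Prop :=
  let X := nEndo (vX M) in let Yh := nEndo (vYh M) in let Y := nEndo (vY M) in
  (forall a, pa M a (vYh M) <-> a = X \/ a = nTh) /\
  (forall v, pa M nD v = pa M Yh v) /\
  (forall a b, proj_dir M a b ->
     (a, b) = (X, Yh) \/ (a, b) = (nTh, Yh) \/ (a, b) = (X, Y) \/
     (a, b) = (Yh, Y) \/ (a, b) = (nD, Y)) /\
  (forall a b, proj_bi M a b -> (a, b) = (X, Y) \/ (a, b) = (Y, X)).

Section observed.
Context (k : nat).

Definition Xv (M : SCM) d th (w : Om M) : Val := sol M d th w (vX M).
Definition Yv (M : SCM) d th (w : Om M) : R := head 0 (tval (sol M d th w (vY M))).
(* Z: an ordered family of k endogenous variables *)
Definition Zv (M : SCM) (zn : 'I_k -> Vn M) d th (w : Om M) : k.-tuple Val :=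
  [tuple sol M d th w (zn i) | i < k].
Definition XZv (M : SCM) zn d th (w : Om M) : Val * k.-tuple Val :=
  (Xv M d th w, Zv M zn d th w).
Definition XZYv (M : SCM) zn d th (w : Om M) : (Val * k.-tuple Val) * R :=
  (XZv M zn d th w, Yv M d th w).

End observed.

Definition law (M : SCM) {dT} {T : measurableType dT} (F : Om M -> T) :
  set T -> \bar R := fun A => Pr M (F @^-1` A).

Definition same_law {dT} {T : measurableType dT} (M1 M2 : SCM)
  (F1 : Om M1 -> T) (F2 : Om M2 -> T) : Prop :=
  forall A, measurable A -> law M1 F1 A = law M2 F2 A.

Definition EY (M : SCM) d th : \bar R := (\int[Pr M]_w (Yv M d th w)%:E)%E.

(* deployment effect (do(D = 0) realised with Theta = th0) and retraining effect *)
Definition tau (M : SCM) th th0 : \bar R := (EY M true th - EY M false th0)%E.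
Definition rho (M : SCM) th1 th0 : \bar R := (EY M true th1 - EY M true th0)%E.

(* g is a version of the conditional expectation E[Y | W] (Doob-Dynkin form) *)
Definition is_cexp {dO} {O : measurableType dO} {dT} {T : measurableType dT}
  (P : probability O R) (Y : O -> R) (W : O -> T) (g : T -> R) : Prop :=
  measurable_fun setT g /\
  P.-integrable setT (fun w => (g (W w))%:E) /\
  forall A, measurable A ->
    (\int[P]_(w in W @^-1` A) (Y w)%:E = \int[P]_(w in W @^-1` A) (g (W w))%:E)%E.

(* transitional conditional independence  Y _||_ {D, Theta} | X, Z  *)
Definition TCI (k : nat) (M : SCM) (zn : 'I_k -> Vn M) : Prop :=
  exists K : R.-pker (Val * k.-tuple Val) ~> R,
  forall d th A B, measurable A -> measurable B ->
    Pr M (XZv k M zn d th @^-1` A `&` Yv M d th @^-1` B) =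
    (\int[Pr M]_(w in XZv k M zn d th @^-1` A) K (XZv k M zn d th w) B)%E.

Definition AC (k : nat) (M : SCM) (zn : 'I_k -> Vn M) : Prop :=
  forall d d' th th', law M (XZv k M zn d th) `<< law M (XZv k M zn d' th').

Definition Y_integrable (M : SCM) : Prop :=
  forall d th, (Pr M).-integrable setT (fun w => (Yv M d th w)%:E).

Definition inSub (k : nat) (M : SCM) (zn : 'I_k -> Vn M) : Prop :=
  [/\ inM M, TCI k M zn, AC k M zn & Y_integrable M].

End SCM_def.

Arguments SCM R m : clear implicits.
Arguments Vn {R m}. Arguments Un {R m}. Arguments vX {R m}. Arguments vYh {R m}.
Arguments vY {R m}. Arguments pa {R m}. Arguments f {R m}. Arguments dOm {R m}.
Arguments Om {R m}. Arguments Pr {R m}. Arguments Uex {R m}. Arguments sol {R m}.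
Arguments gedge {R m}. Arguments Obs {R m}. Arguments lat {R m}.
Arguments proj_dir {R m}. Arguments proj_bi {R m}. Arguments inM {R m}.
Arguments Xv {R m}. Arguments Yv {R m}. Arguments Zv {R m k}. Arguments XZv {R m k}.
Arguments XZYv {R m k}. Arguments law {R m}. Arguments same_law {R m dT T}.
Arguments EY {R m}. Arguments tau {R m}. Arguments rho {R m}.
Arguments is_cexp {R dO O dT T}. Arguments TCI {R m k}. Arguments AC {R m k}.
Arguments Y_integrable {R m}. Arguments inSub {R m k}.

(* Under Y _||_ {D, Theta} | X, Z a single kernel K from (X, Z) to Y gives the
   conditional law of Y in every regime, so the mean of K is a common version of
   E[Y | X, Z] in all regimes.  A version g of E[Y | X, Z] in one regime agrees
   with this mean almost surely for the law of (X, Z) in that regime, hence, by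
   the mutual absolute continuity of these laws, in every regime: g is a version
   of E[Y | X, Z] in every regime, and E[Y | do(d, theta)] is the mean of
   g(X, Z) under do(d, theta).  If two models have the same law of (X, Z, Y) in
   one regime, the kernel mean of one is a version of E[Y | X, Z] in the other,
   which gives identifiability; the baseline predictor is then the tower
   property E[E[Y | X, Z] | X] = E[Y | X]. *)

From HB Require Import structures.
From mathcomp Require Import all_boot all_order all_algebra.
From mathcomp Require Import all_classical all_reals all_analysis.
From mathcomp Require Import measurable_realfun.
Import Order.TTheory GRing.Theory Num.Theory HBNNSimple.
Local Open Scope classical_set_scope.
Local Open Scope ring_scope.

(* The measure instance of [pushforward P W] depends on the proof [mW], which
   canonical structure inference cannot find. *)
Definition image_measure {R : realType} {d dT} {O : measurableType d}
    {T : measurableType dT} (P : {measure set O -> \bar R}) {W : O -> T}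
    (mW : measurable_fun setT W) : {measure set T -> \bar R} :=
  @measure_function_pushforward__canonical__measure_function_Measure
    _ _ _ _ _ P W mW.

Lemma preimage_pairT {A B C : Type} (F : A -> B) (G : A -> C) (E : set B) :
  (fun a => (F a, G a)) @^-1` (E `*` setT) = F @^-1` E.
Proof. by apply/seteqP; split => [a []|a]. Qed.

Section image_measure.
Context {R : realType} {d} {O : measurableType d} {P : {measure set O -> \bar R}}
  {dT} {T : measurableType dT} {W : O -> T} (mW : measurable_fun setT W).
Local Open Scope ereal_scope.

Lemma measurable_preimage {A} : measurable A -> measurable (W @^-1` A).
Proof. by move=> mA; rewrite -[_ @^-1` _]setTI; exact: mW. Qed.

Lemma integrable_preimage {h : O -> \bar R} {A} :
  measurable A -> P.-integrable setT h -> P.-integrable (W @^-1` A) h.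
Proof. by move=> mA; apply: integrableS => //; exact: measurable_preimage. Qed.

Lemma integrable_image {f : T -> \bar R} : measurable_fun setT f ->
  P.-integrable setT (f \o W) -> (image_measure P mW).-integrable setT f.
Proof. by move=> mf fi; exact: integrable_pushforward. Qed.

Lemma integrable_image_comp {f : T -> \bar R} :
  (image_measure P mW).-integrable setT f -> P.-integrable setT (f \o W).
Proof.
move=> /integrableP[mf fi]; apply/integrableP; split; first exact: measurableT_comp.
move: fi; rewrite (ge0_integral_pushforward mW) ?preimage_setT//.
exact: measurableT_comp.
Qed.

Lemma integral_image {f : T -> R} {A} :
  measurable A -> measurable_fun setT f -> P.-integrable setT (EFin \o f \o W) ->
  \int[image_measure P mW]_(t in A) (f t)%:E = \int[P]_(w in W @^-1` A) (f (W w))%:E.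
Proof.
move=> mA mf fi; apply: integral_pushforward => //; first exact/measurable_EFinP.
exact: integrable_preimage.
Qed.

Lemma ae_eq_image_comp {f g : T -> R} :
  ae_eq (image_measure P mW) setT (EFin \o f) (EFin \o g) ->
  {ae P, forall w, f (W w) = g (W w)}.
Proof.
move=> [N [mN N0 fgN]]; exists (W @^-1` N); split => //.
- exact: measurable_preimage.
- move=> w /= fgw; apply: fgN => /= fg; apply: fgw.
  by have [] := fg I.
Qed.

Lemma integral_preimage_ae_eq {f g : T -> R} :
  measurable_fun setT f -> measurable_fun setT g ->
  P.-integrable setT (EFin \o f \o W) -> P.-integrable setT (EFin \o g \o W) ->
  (forall A, measurable A -> \int[P]_(w in W @^-1` A) (f (W w))%:E =
                              \int[P]_(w in W @^-1` A) (g (W w))%:E) ->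
  ae_eq (image_measure P mW) setT (EFin \o f) (EFin \o g).
Proof.
move=> mf mg fi gi fg; apply: integral_ae_eq => //.
- by apply: integrable_image => //; exact/measurable_EFinP.
- exact/measurable_EFinP.
by move=> A _ mA; rewrite !integral_image//; exact: fg.
Qed.

End image_measure.

Lemma ae_eq_integrable {R : realType} {d} {T : measurableType d}
    (mu : {measure set T -> \bar R}) (f g : T -> \bar R) :
  ae_eq mu setT f g -> measurable_fun setT g ->
  mu.-integrable setT f -> mu.-integrable setT g.
Proof.
move=> fg mg /integrableP[mf fi]; apply/integrableP; split => //.
suff <- : (\int[mu]_x (abse \o f) x = \int[mu]_x (abse \o g) x)%E by [].
by apply: ae_eq_integral => //; [exact: measurableT_comp|exact: measurableT_comp|
                                exact: ae_eq_abse].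
Qed.

Section conditional_expectation.
Context {R : realType} {d} {O : measurableType d} {P : probability O R}
  {dT} {T : measurableType dT}.
Local Open Scope ereal_scope.

Lemma is_cexp_image_ae_eq {Y : O -> R} {W : O -> T} (mW : measurable_fun setT W)
    {g1 g2 : T -> R} :
  is_cexp P Y W g1 -> is_cexp P Y W g2 ->
  ae_eq (image_measure P mW) setT (EFin \o g1) (EFin \o g2).
Proof.
move=> [mg1 [g1i g1E]] [mg2 [g2i g2E]].
by apply: integral_preimage_ae_eq => // A mA; rewrite -g1E// g2E.
Qed.

Lemma is_cexp_ae_eq {Y : O -> R} {W : O -> T} (mW : measurable_fun setT W)
    {g1 g2 : T -> R} :
  is_cexp P Y W g1 -> is_cexp P Y W g2 -> {ae P, forall w, g1 (W w) = g2 (W w)}.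
Proof.
by move=> g1E g2E; apply: (ae_eq_image_comp mW); exact: (is_cexp_image_ae_eq mW g1E g2E).
Qed.

Lemma is_cexp_integral {Y : O -> R} {W : O -> T} {g : T -> R} :
  is_cexp P Y W g -> \int[P]_w (Y w)%:E = \int[P]_w (g (W w))%:E.
Proof. by move=> [_ [_ gE]]; have := gE _ measurableT; rewrite preimage_setT. Qed.

Lemma is_cexp_dominated {Y Y' : O -> R} {W W' : O -> T}
    (mW : measurable_fun setT W) (mW' : measurable_fun setT W') {k g : T -> R} :
  image_measure P mW' `<< image_measure P mW ->
  is_cexp P Y W k -> is_cexp P Y' W' k -> is_cexp P Y W g -> is_cexp P Y' W' g.
Proof.
move=> W'W kE [mk [ki' kE']] gE; have [mg _] := gE.
have kg : ae_eq (image_measure P mW') setT (EFin \o k) (EFin \o g).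
  exact: (null_dominates_ae_eq measurableT W'W (is_cexp_image_ae_eq mW kE gE)).
have gi : (image_measure P mW').-integrable setT (EFin \o g).
  apply: ae_eq_integrable kg _ _; first exact/measurable_EFinP.
  by apply: integrable_image => //; exact/measurable_EFinP.
have gi' := integrable_image_comp mW' gi.
split=> //; split=> // A mA.
rewrite kE'// -(integral_image mW' mA mk ki') -(integral_image mW' mA mg gi').
apply: ae_eq_integral => //.
- exact/measurable_funTS/measurable_EFinP.
- exact/measurable_funTS/measurable_EFinP.
- exact: ae_eq_subset kg.
Qed.

Lemma is_cexp_tower {dV} {V : measurableType dV} {Y : O -> R}
    {W : O -> T} {U : O -> V} {g : T * V -> R} {h : T -> R} :
  is_cexp P Y (fun w => (W w, U w)) g -> is_cexp P (fun w => g (W w, U w)) W h ->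
  is_cexp P Y W h.
Proof.
move=> [_ [_ gE]] [mh [hi hE]]; split=> //; split=> // A mA.
by rewrite -hE// -(preimage_pairT W U); apply: gE; exact: measurableX.
Qed.

End conditional_expectation.

Section same_law.
Context {R : realType} {d1} {O1 : measurableType d1} {P1 : probability O1 R}
  {d2} {O2 : measurableType d2} {P2 : probability O2 R}
  {dT} {T : measurableType dT} {W1 : O1 -> T} {W2 : O2 -> T}
  (mW1 : measurable_fun setT W1) (mW2 : measurable_fun setT W2).
Hypothesis W12 : forall A, measurable A -> P1 (W1 @^-1` A) = P2 (W2 @^-1` A).
Local Open Scope ereal_scope.

Let integral_image_same_law D (f : T -> \bar R) :
  \int[image_measure P1 mW1]_(t in D) f t = \int[image_measure P2 mW2]_(t in D) f t.
Proof. by apply: eq_measure_integral => A mA _; exact: W12. Qed.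

Lemma integrable_same_law {f : T -> R} : measurable_fun setT f ->
  P2.-integrable setT (EFin \o f \o W2) -> P1.-integrable setT (EFin \o f \o W1).
Proof.
move=> mf fi2; have mfE : measurable_fun setT (EFin \o f) by exact/measurable_EFinP.
have /integrableP[_ fi] := integrable_image mW2 mfE fi2.
apply: (integrable_image_comp mW1); apply/integrableP; split => //.
by rewrite integral_image_same_law.
Qed.

Lemma integral_preimage_same_law {f : T -> R} {A} :
  measurable A -> measurable_fun setT f -> P2.-integrable setT (EFin \o f \o W2) ->
  \int[P1]_(w in W1 @^-1` A) (f (W1 w))%:E = \int[P2]_(w in W2 @^-1` A) (f (W2 w))%:E.
Proof.
move=> mA mf fi2; have fi1 := integrable_same_law mf fi2.
rewrite -(integral_image mW1 mA mf fi1) -(integral_image mW2 mA mf fi2).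
exact: integral_image_same_law.
Qed.

Lemma is_cexp_same_law {Y1 : O1 -> R} {Y2 : O2 -> R} {g : T -> R} :
  (forall A, measurable A -> \int[P1]_(w in W1 @^-1` A) (Y1 w)%:E =
                              \int[P2]_(w in W2 @^-1` A) (Y2 w)%:E) ->
  is_cexp P2 Y2 W2 g -> is_cexp P1 Y1 W1 g.
Proof.
move=> Y12 [mg [gi gE]]; split=> //; split; first exact: integrable_same_law gi.
by move=> A mA; rewrite Y12// gE//; apply/esym/integral_preimage_same_law.
Qed.

Lemma is_cexp_integral_same_law {Y1 : O1 -> R} {Y2 : O2 -> R} {g : T -> R} {A} :
  measurable A -> is_cexp P1 Y1 W1 g -> is_cexp P2 Y2 W2 g ->
  \int[P1]_(w in W1 @^-1` A) (Y1 w)%:E = \int[P2]_(w in W2 @^-1` A) (Y2 w)%:E.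
Proof.
move=> mA [mg [_ g1E]] [_ [gi2 g2E]]; rewrite g1E// g2E//.
exact: integral_preimage_same_law.
Qed.

End same_law.

Lemma same_law_fst {R : realType} {d1 d2 dT dV} {O1 : measurableType d1}
    {O2 : measurableType d2} {T : measurableType dT} {V : measurableType dV}
    {P1 : probability O1 R} {P2 : probability O2 R}
    {W1 : O1 -> T} {W2 : O2 -> T} {U1 : O1 -> V} {U2 : O2 -> V} :
  (forall A, measurable A -> P1 ((fun w => (W1 w, U1 w)) @^-1` A) =
                              P2 ((fun w => (W2 w, U2 w)) @^-1` A)) ->
  forall A, measurable A -> P1 (W1 @^-1` A) = P2 (W2 @^-1` A).
Proof.
move=> WU12 A mA.
by rewrite -(preimage_pairT W1 U1) -(preimage_pairT W2 U2); apply: WU12; exact: measurableX.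
Qed.

Section same_joint_law.
Context {R : realType} {d1} {O1 : measurableType d1} {P1 : probability O1 R}
  {d2} {O2 : measurableType d2} {P2 : probability O2 R} {dT} {T : measurableType dT}
  {W1 : O1 -> T} {W2 : O2 -> T} {Y1 : O1 -> R} {Y2 : O2 -> R}
  (mW1 : measurable_fun setT W1) (mW2 : measurable_fun setT W2)
  (mY1 : measurable_fun setT Y1) (mY2 : measurable_fun setT Y2).
Hypothesis WY12 : forall A, measurable A ->
  P1 ((fun w => (W1 w, Y1 w)) @^-1` A) = P2 ((fun w => (W2 w, Y2 w)) @^-1` A).
Hypothesis Y2int : P2.-integrable setT (EFin \o Y2).
Local Open Scope ereal_scope.

Lemma integral_preimage_same_joint_law {A} : measurable A ->
  \int[P1]_(w in W1 @^-1` A) (Y1 w)%:E = \int[P2]_(w in W2 @^-1` A) (Y2 w)%:E.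
Proof.
move=> mA; rewrite -(preimage_pairT W1 Y1) -(preimage_pairT W2 Y2).
have mWY1 : measurable_fun setT (fun w => (W1 w, Y1 w)) by exact: measurable_fun_pair.
have mWY2 : measurable_fun setT (fun w => (W2 w, Y2 w)) by exact: measurable_fun_pair.
apply: (integral_preimage_same_law mWY1 mWY2 WY12 (f := snd)) => //.
exact: measurableX.
Qed.

Lemma is_cexp_same_joint_law {g : T -> R} : is_cexp P2 Y2 W2 g -> is_cexp P1 Y1 W1 g.
Proof.
apply: (is_cexp_same_law mW1 mW2 (same_law_fst WY12)) => A mA.
exact: integral_preimage_same_joint_law.
Qed.

End same_joint_law.

(* The mean of [K t], taken as [0] when [K t] has no first moment. *)
Definition kernel_mean {R : realType} {dT} {T : measurableType dT}
    (K : R.-ker T ~> R) (t : T) : R :=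
  fine (\int[K t]_y (@EFin R)^\+ y)%E - fine (\int[K t]_y (@EFin R)^\- y)%E.

Lemma EFin_funepos_le {R : realType} (y : R) : ((@EFin R)^\+ y <= `|y%:E|)%E.
Proof. by rewrite funeposE ge_max lee_abs abse_ge0. Qed.

Lemma EFin_funeneg_le {R : realType} (y : R) : ((@EFin R)^\- y <= `|y%:E|)%E.
Proof. by rewrite funenegE ge_max -abseN lee_abs abse_ge0. Qed.

Lemma measurable_kernel_mean {R : realType} {dT} {T : measurableType dT}
    (K : R.-ker T ~> R) : measurable_fun setT (kernel_mean K).
Proof.
have mK (h : R -> \bar R) : measurable_fun setT h -> (forall y, (0 <= h y)%E) ->
    measurable_fun setT (fun t => fine (\int[K t]_y h y)).
  move=> mh h0; apply: measurableT_comp => //.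
  apply: measurable_fun_integral_kernel => //.
  by move=> U mU; exact: measurable_kernel.
apply: measurable_funB; apply: mK => //.
- exact/measurable_funepos/measurable_EFinP.
- exact/measurable_funeneg/measurable_EFinP.
Qed.

Section disintegration.
Context {R : realType} {d} {O : measurableType d} {P : probability O R}
  {dT} {T : measurableType dT} {W : O -> T} {Y : O -> R}
  (mW : measurable_fun setT W) (mY : measurable_fun setT Y) {K : R.-ker T ~> R}.
Hypothesis WY_K : forall A B, measurable A -> measurable B ->
  P (W @^-1` A `&` Y @^-1` B) = (\int[P]_(w in W @^-1` A) K (W w) B)%E.
Local Open Scope ereal_scope.

Let mKW B : measurable B -> measurable_fun setT (fun w => K (W w) B).
Proof. by move=> mB; exact: measurableT_comp (measurable_kernel K _ mB) mW. Qed.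

Let integral_indic_disintegration A B : measurable A -> measurable B ->
  \int[P]_(w in W @^-1` A) (\1_B (Y w))%:E = \int[P]_(w in W @^-1` A) K (W w) B.
Proof.
move=> mA mB; have mWA := measurable_preimage mW mA.
have mYB : measurable (Y @^-1` B) by rewrite -[_ @^-1` _]setTI; exact: mY.
by rewrite -WY_K// setIC -integral_indic.
Qed.

Let integral_nnsfun_disintegration A (f : {nnsfun R >-> R}) : measurable A ->
  \int[P]_(w in W @^-1` A) (f (Y w))%:E =
  \int[P]_(w in W @^-1` A) \int[K (W w)]_y (f y)%:E.
Proof.
move=> mA; have mWA := measurable_preimage mW mA.
have mf r : measurable (f @^-1` [set r]) by exact: measurable_funPTI.
transitivity (\sum_(r \in range f)
    \int[P]_(w in W @^-1` A) (r * \1_(f @^-1` [set r]) (Y w))%:E).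
  under eq_integral do rewrite fimfunE -fsumEFin//.
  rewrite ge0_integral_fsum//.
  - move=> r; apply/measurable_EFinP/measurable_funM => //.
    by apply/measurable_funTS/measurableT_comp => //; exact: measurable_indic.
  - by move=> r w _; rewrite EFinM nnfun_muleindic_ge0.
transitivity (\sum_(r \in range f)
    \int[P]_(w in W @^-1` A) (r%:E * K (W w) (f @^-1` [set r]))).
  apply: eq_fsbigr => r _; under eq_integral do rewrite EFinM.
  have [r0|r0] := leP 0%R r.
    rewrite ge0_integralZl//.
    - rewrite ge0_integralZl//; last exact/measurable_funTS/mKW.
      by rewrite integral_indic_disintegration.
    - apply: measurable_funTS; apply/measurable_EFinP.
      by apply: measurableT_comp mY; exact: measurable_indic.
  rewrite integral0_eq; last by move=> w _; rewrite preimage_nnfun0// indic0 mule0.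
  by rewrite integral0_eq// => w _; rewrite preimage_nnfun0// measure0 mule0.
rewrite -ge0_integral_fsum//; last 2 first.
  - by move=> r; apply/measurable_funeM/measurable_funTS; exact: mKW.
  - by move=> r w _; apply: (mulemu_ge0 (fun r => f @^-1` [set r])); exact: preimage_nnfun0.
apply: eq_integral => w _.
under [RHS]eq_integral do rewrite fimfunE -fsumEFin//.
rewrite ge0_integral_fsum//; last 2 first.
  - by move=> r; exact/measurable_EFinP/measurable_funM.
  - by move=> r y _; rewrite EFinM nnfun_muleindic_ge0.
apply: eq_fsbigr => r _.
rewrite (integralZl_indic _ (fun r => f @^-1` [set r]))//; last first.
  by move=> r0; rewrite preimage_nnfun0.
by rewrite integral_indic// setIT.
Qed.

Lemma integral_disintegration A (h : R -> \bar R) :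
  measurable A -> measurable_fun setT h -> (forall y, 0 <= h y) ->
  \int[P]_(w in W @^-1` A) h (Y w) = \int[P]_(w in W @^-1` A) \int[K (W w)]_y h y.
Proof.
move=> mA mh h0; have mWA := measurable_preimage mW mA.
pose h_ := nnsfun_approx measurableT mh.
have h_cvg y : h y = limn (fun n => (h_ n y)%:E).
  by apply/esym/cvg_lim => //; exact: cvg_nnsfun_approx.
have h_nd y : {homo (fun n => (h_ n y)%:E) : m n / (m <= n)%N >-> m <= n}.
  by move=> m n mn; rewrite lee_fin; exact/lefP/nd_nnsfun_approx.
have Kh_ n : measurable_fun setT (fun t => \int[K t]_y (h_ n y)%:E).
  apply: measurable_fun_integral_kernel.
  - by move=> U mU; exact: measurable_kernel.
  - by move=> y; rewrite lee_fin.
  - exact/measurable_EFinP.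
transitivity (limn (fun n => \int[P]_(w in W @^-1` A) (h_ n (Y w))%:E)).
  rewrite -monotone_convergence//.
  - by apply: eq_integral => w _; rewrite h_cvg.
  - by move=> n; apply/measurable_EFinP/measurable_funTS/measurableT_comp.
  - by move=> n x _; rewrite lee_fin.
rewrite (_ : (fun n => _) =
    (fun n => \int[P]_(w in W @^-1` A) \int[K (W w)]_y (h_ n y)%:E)); last first.
  by apply/funext => n; exact: integral_nnsfun_disintegration.
rewrite -monotone_convergence//.
- apply: eq_integral => w _; rewrite -monotone_convergence//.
  + by apply: eq_integral => y _; rewrite h_cvg.
  + by move=> n; exact/measurable_EFinP.
  + by move=> n y _; rewrite lee_fin.
- by move=> n; apply: measurable_funTS; exact: measurableT_comp (Kh_ n) mW.
- by move=> n w _; apply: integral_ge0 => y _; rewrite lee_fin.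
- move=> w _ m n mn; apply: ge0_le_integral => //.
  + by move=> y _; rewrite lee_fin.
  + exact/measurable_EFinP.
  + exact/measurable_EFinP.
  + by move=> y _; exact: h_nd.
Qed.

Hypothesis Yint : P.-integrable setT (EFin \o Y).

Let mKint (h : R -> \bar R) : measurable_fun setT h -> (forall y, 0 <= h y) ->
  measurable_fun setT (fun t => \int[K t]_y h y).
Proof.
move=> mh h0; apply: measurable_fun_integral_kernel => //.
by move=> U mU; exact: measurable_kernel.
Qed.

Let integral_kernel_integral (h : R -> \bar R) A : measurable A ->
  measurable_fun setT h -> (forall y, 0 <= h y) ->
  \int[P]_(w in W @^-1` A) h (Y w) =
  \int[image_measure P mW]_(t in A) \int[K t]_y h y.
Proof.
move=> mA mh h0; rewrite integral_disintegration// ge0_integral_pushforward//.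
- exact/measurable_funTS/mKint.
- by move=> t _; exact: integral_ge0.
Qed.

Let integrable_kernel_integral (h : R -> \bar R) : measurable_fun setT h ->
  (forall y, 0 <= h y) -> (forall y, h y <= `|y%:E|) ->
  (image_measure P mW).-integrable setT (fun t => \int[K t]_y h y).
Proof.
move=> mh h0 hY; apply/integrableP; split; first exact: mKint.
under eq_integral do rewrite gee0_abs ?integral_ge0//.
rewrite -integral_kernel_integral// preimage_setT.
apply: le_lt_trans (integrableP _ _ _ Yint).2; apply: ge0_le_integral => //.
- exact: measurableT_comp.
- by apply: measurableT_comp => //; exact/measurable_EFinP.
Qed.

Let integrable_fine_kernel_integral (h : R -> \bar R) : measurable_fun setT h ->
  (forall y, 0 <= h y) -> (forall y, h y <= `|y%:E|) ->
  (image_measure P mW).-integrable setT (EFin \o fine \o (fun t => \int[K t]_y h y)).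
Proof.
move=> mh h0 hY.
apply: (le_integrable measurableT _ _ (integrable_kernel_integral _ mh h0 hY)).
  by apply/measurable_EFinP/measurableT_comp => //; exact: mKint.
move=> t _ /=; have := integral_ge0 (K t) (fun y _ => h0 y).
by case: (\int[K t]_y h y) => [r||] //= _; rewrite leey.
Qed.

Let integral_fine_kernel_integral (h : R -> \bar R) A : measurable A ->
  measurable_fun setT h -> (forall y, 0 <= h y) -> (forall y, h y <= `|y%:E|) ->
  \int[image_measure P mW]_(t in A) (fine (\int[K t]_y h y))%:E =
  \int[P]_(w in W @^-1` A) h (Y w).
Proof.
move=> mA mh h0 hY; rewrite integral_kernel_integral//.
apply: ae_eq_integral => //.
- by apply/measurable_funTS/measurable_EFinP/measurableT_comp => //; exact: mKint.
- exact/measurable_funTS/mKint.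
apply: filterS (integrable_ae measurableT (integrable_kernel_integral _ mh h0 hY)).
by move=> t + _ => /(_ I) /fineK.
Qed.

Lemma integral_kernel_mean A : measurable A ->
  \int[P]_(w in W @^-1` A) (Y w)%:E =
  \int[image_measure P mW]_(t in A) (kernel_mean K t)%:E.
Proof.
move=> mA.
have mpos : measurable_fun setT (@EFin R)^\+.
  exact/measurable_funepos/measurable_EFinP.
have mneg : measurable_fun setT (@EFin R)^\-.
  exact/measurable_funeneg/measurable_EFinP.
under [RHS]eq_integral do rewrite EFinB.
rewrite integralB_EFin//; last 2 first.
- exact: integrableS (integrable_fine_kernel_integral _ mpos _ EFin_funepos_le).
- exact: integrableS (integrable_fine_kernel_integral _ mneg _ EFin_funeneg_le).
rewrite !integral_fine_kernel_integral//; last 2 first.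
- exact: EFin_funeneg_le.
- exact: EFin_funepos_le.
by rewrite [LHS]integralE -/(EFin \o Y) funepos_comp funeneg_comp.
Qed.

Lemma is_cexp_kernel_mean : is_cexp P Y W (kernel_mean K).
Proof.
have mk := measurable_kernel_mean K.
have ki : (image_measure P mW).-integrable setT (EFin \o kernel_mean K).
  rewrite (_ : EFin \o _ = fun t => (fine (\int[K t]_y (@EFin R)^\+ y))%:E -
                                   (fine (\int[K t]_y (@EFin R)^\- y))%:E)//.
  apply: integrableB => //.
  - apply: integrable_fine_kernel_integral EFin_funepos_le => //.
    exact/measurable_funepos/measurable_EFinP.
  - apply: integrable_fine_kernel_integral EFin_funeneg_le => //.
    exact/measurable_funeneg/measurable_EFinP.
have kWi := integrable_image_comp mW ki.
split=> //; split=> // A mA.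
by rewrite integral_kernel_mean// (integral_image mW mA mk kWi).
Qed.

End disintegration.

Lemma measurable_head {R : realType} n :
  measurable_fun setT (fun t : n.-tuple R => head 0 (tval t)).
Proof.
case: n => [|n].
  rewrite (_ : (fun t => _) = fun=> 0); first exact: measurable_cst.
  by apply/funext => t; rewrite (tuple0 t).
rewrite (_ : (fun t => _) = fun t : n.+1.-tuple R => tnth t ord0).
  exact: measurable_tnth.
by apply/funext => t; rewrite (tnth_nth 0) nth0.
Qed.

Section scm_measurability.
Context {R : realType} {m k : nat} (M : SCM R m) (zn : 'I_k -> Vn M).

Lemma measurable_Xv d th : measurable_fun setT (Xv M d th).
Proof. exact: sol_meas. Qed.

Lemma measurable_Yv d th : measurable_fun setT (Yv M d th).
Proof.
have -> : Yv M d th = (fun t : Val R m => head 0 (tval t)) \o (fun w => sol M d th w (vY M)).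
  by [].
by apply: measurableT_comp; [exact: measurable_head|exact: sol_meas].
Qed.

Lemma measurable_XZv d th : measurable_fun setT (XZv M zn d th).
Proof.
apply: measurable_fun_pair; first exact: measurable_Xv.
apply/measurable_fun_tnthP => i.
rewrite (_ : _ \o _ = fun w => sol M d th w (zn i)); first exact: sol_meas.
by apply/funext => w /=; rewrite tnth_mktuple.
Qed.

End scm_measurability.

Section scm_regimes.
Context {R : realType} {m k : nat} {M : SCM R m} {zn : 'I_k -> Vn M}.
Local Open Scope ereal_scope.

Lemma TCI_is_cexp : TCI M zn -> Y_integrable M ->
  exists g, forall d th, is_cexp (Pr M) (Yv M d th) (XZv M zn d th) g.
Proof.
move=> [K WY_K] Yint; exists (kernel_mean K) => d th.
exact: (is_cexp_kernel_mean (measurable_XZv M zn d th) (measurable_Yv M d th) (K := K)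
  (WY_K d th) (Yint d th)).
Qed.

Lemma is_cexp_regime {d th d' th'} {g : Val R m * k.-tuple (Val R m) -> R} :
  inSub M zn -> is_cexp (Pr M) (Yv M d th) (XZv M zn d th) g ->
  is_cexp (Pr M) (Yv M d' th') (XZv M zn d' th') g.
Proof.
move=> [_ tci ac Yint] gE; have [kappa kE] := TCI_is_cexp tci Yint.
apply: (is_cexp_dominated (measurable_XZv M zn d th) (measurable_XZv M zn d' th')
  _ (kE d th)) => //.
exact: ac.
Qed.

Lemma EY_is_cexp {d th} d' th' {g : Val R m * k.-tuple (Val R m) -> R} :
  inSub M zn -> is_cexp (Pr M) (Yv M d th) (XZv M zn d th) g ->
  EY M d' th' = \int[Pr M]_w (g (XZv M zn d' th' w))%:E.
Proof.
by move=> Msub gE; rewrite /EY; exact: is_cexp_integral (is_cexp_regime Msub gE).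
Qed.

End scm_regimes.

Section same_law_scm.
Context {R : realType} {m k : nat} {M1 : SCM R m} {zn1 : 'I_k -> Vn M1}
  {M2 : SCM R m} {zn2 : 'I_k -> Vn M2} {d : bool} {th : Val R m}.

Lemma same_law_XZv : same_law M1 M2 (XZYv M1 zn1 d th) (XZYv M2 zn2 d th) ->
  same_law M1 M2 (XZv M1 zn1 d th) (XZv M2 zn2 d th).
Proof. exact: same_law_fst. Qed.

Lemma same_law_Xv : same_law M1 M2 (XZv M1 zn1 d th) (XZv M2 zn2 d th) ->
  same_law M1 M2 (Xv M1 d th) (Xv M2 d th).
Proof. exact: same_law_fst. Qed.

End same_law_scm.

Section scm_identification.
Context {R : realType} {m k : nat} {M1 : SCM R m} {zn1 : 'I_k -> Vn M1}
  {M2 : SCM R m} {zn2 : 'I_k -> Vn M2}.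
Hypotheses (M1sub : inSub M1 zn1) (M2sub : inSub M2 zn2).
Local Open Scope ereal_scope.

Lemma integral_Y_identifiable {d th d' th'} :
  same_law M1 M2 (XZYv M1 zn1 d th) (XZYv M2 zn2 d th) ->
  same_law M1 M2 (XZv M1 zn1 d' th') (XZv M2 zn2 d' th') ->
  forall A, measurable A ->
  \int[Pr M1]_(w in XZv M1 zn1 d' th' @^-1` A) (Yv M1 d' th' w)%:E =
  \int[Pr M2]_(w in XZv M2 zn2 d' th' @^-1` A) (Yv M2 d' th' w)%:E.
Proof.
move=> XZY12 XZ12 A mA; have [_ tci2 _ Y2int] := M2sub.
have [kappa kE] := TCI_is_cexp tci2 Y2int.
have kE1 : is_cexp (Pr M1) (Yv M1 d th) (XZv M1 zn1 d th) kappa.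
  exact: (is_cexp_same_joint_law (measurable_XZv M1 zn1 d th) (measurable_XZv M2 zn2 d th)
    (measurable_Yv M1 d th) (measurable_Yv M2 d th) XZY12 (Y2int d th) (kE d th)).
exact: (is_cexp_integral_same_law (measurable_XZv M1 zn1 d' th')
  (measurable_XZv M2 zn2 d' th') XZ12 mA (is_cexp_regime M1sub kE1) (kE d' th')).
Qed.

Lemma EY_identifiable {d th d' th'} :
  same_law M1 M2 (XZYv M1 zn1 d th) (XZYv M2 zn2 d th) ->
  same_law M1 M2 (XZv M1 zn1 d' th') (XZv M2 zn2 d' th') ->
  EY M1 d' th' = EY M2 d' th'.
Proof.
move=> XZY12 XZ12; have := integral_Y_identifiable XZY12 XZ12 _ measurableT.
by rewrite !preimage_setT.
Qed.

End scm_identification.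

Theorem corollary1 (R : realType) (m k : nat) :
  (* (T1), first identification formula *)
  ((forall (M : SCM R m) (zn : 'I_k -> Vn M), inSub M zn ->
     forall (th th0 : Val R m) (g : Val R m * k.-tuple (Val R m) -> R),
     is_cexp (Pr M) (Yv M false th0) (XZv M zn false th0) g ->
     tau M th th0 =
       (\int[Pr M]_w (g (XZv M zn true th w))%:E - EY M false th0)%E)
   /\
   (forall (M1 : SCM R m) (zn1 : 'I_k -> Vn M1)
           (M2 : SCM R m) (zn2 : 'I_k -> Vn M2),
     inSub M1 zn1 -> inSub M2 zn2 -> forall th th0 : Val R m,
     same_law M1 M2 (XZYv M1 zn1 false th0) (XZYv M2 zn2 false th0) ->
     same_law M1 M2 (XZv M1 zn1 true th) (XZv M2 zn2 true th) ->
     tau M1 th th0 = tau M2 th th0)) /\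
  (* (T1), second identification formula *)
  ((forall (M : SCM R m) (zn : 'I_k -> Vn M), inSub M zn ->
     forall (th th0 : Val R m) (g : Val R m * k.-tuple (Val R m) -> R),
     is_cexp (Pr M) (Yv M true th) (XZv M zn true th) g ->
     tau M th th0 =
       (EY M true th - \int[Pr M]_w (g (XZv M zn false th0 w))%:E)%E)
   /\
   (forall (M1 : SCM R m) (zn1 : 'I_k -> Vn M1)
           (M2 : SCM R m) (zn2 : 'I_k -> Vn M2),
     inSub M1 zn1 -> inSub M2 zn2 -> forall th th0 : Val R m,
     same_law M1 M2 (XZYv M1 zn1 true th) (XZYv M2 zn2 true th) ->
     same_law M1 M2 (XZv M1 zn1 false th0) (XZv M2 zn2 false th0) ->
     tau M1 th th0 = tau M2 th th0)) /\
  (* (T2) retraining effect rho(th1, th0) with th1 = theta_{t+1}, th0 = theta_t *)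
  ((forall (M : SCM R m) (zn : 'I_k -> Vn M), inSub M zn ->
     forall (th1 th0 : Val R m) (g : Val R m * k.-tuple (Val R m) -> R),
     is_cexp (Pr M) (Yv M true th0) (XZv M zn true th0) g ->
     rho M th1 th0 =
       (\int[Pr M]_w (g (XZv M zn true th1 w))%:E - EY M true th0)%E)
   /\
   (forall (M1 : SCM R m) (zn1 : 'I_k -> Vn M1)
           (M2 : SCM R m) (zn2 : 'I_k -> Vn M2),
     inSub M1 zn1 -> inSub M2 zn2 -> forall th1 th0 : Val R m,
     same_law M1 M2 (XZYv M1 zn1 true th0) (XZYv M2 zn2 true th0) ->
     same_law M1 M2 (XZv M1 zn1 true th1) (XZv M2 zn2 true th1) ->
     rho M1 th1 th0 = rho M2 th1 th0)) /\
  (* (T3) baseline predictor E[Y | X, do(D = 0)] *)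
  ((forall (M : SCM R m) (zn : 'I_k -> Vn M), inSub M zn ->
     forall (th th0 : Val R m) (g : Val R m * k.-tuple (Val R m) -> R)
            (h b : Val R m -> R),
     (* g = E[Y | X, Z, do(D = 1, Theta = th)] *)
     is_cexp (Pr M) (Yv M true th) (XZv M zn true th) g ->
     (* h = E[ g(X, Z) | X, do(D = 0) ] *)
     is_cexp (Pr M) (fun w => g (XZv M zn false th0 w)) (Xv M false th0) h ->
     (* b = E[Y | X, do(D = 0)]  (the baseline predictor) *)
     is_cexp (Pr M) (Yv M false th0) (Xv M false th0) b ->
     {ae Pr M, forall w, b (Xv M false th0 w) = h (Xv M false th0 w)})
   /\
   (forall (M1 : SCM R m) (zn1 : 'I_k -> Vn M1)
           (M2 : SCM R m) (zn2 : 'I_k -> Vn M2),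
     inSub M1 zn1 -> inSub M2 zn2 -> forall (th th0 : Val R m)
     (b1 b2 : Val R m -> R),
     same_law M1 M2 (XZYv M1 zn1 true th) (XZYv M2 zn2 true th) ->
     same_law M1 M2 (XZv M1 zn1 false th0) (XZv M2 zn2 false th0) ->
     is_cexp (Pr M1) (Yv M1 false th0) (Xv M1 false th0) b1 ->
     is_cexp (Pr M2) (Yv M2 false th0) (Xv M2 false th0) b2 ->
     {ae Pr M1, forall w, b1 (Xv M1 false th0 w) = b2 (Xv M1 false th0 w)})).
Proof.
split; [split|split; [split|split; [split|split]]].
- by move=> M zn Msub th th0 g gE; rewrite /tau (EY_is_cexp true th Msub gE).
- move=> M1 zn1 M2 zn2 M1sub M2sub th th0 XZY0 XZ1; rewrite /tau.
  by rewrite (EY_identifiable M1sub M2sub XZY0 XZ1)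
             (EY_identifiable M1sub M2sub XZY0 (same_law_XZv XZY0)).
- by move=> M zn Msub th th0 g gE; rewrite /tau (EY_is_cexp false th0 Msub gE).
- move=> M1 zn1 M2 zn2 M1sub M2sub th th0 XZY1 XZ0; rewrite /tau.
  by rewrite (EY_identifiable M1sub M2sub XZY1 XZ0)
             (EY_identifiable M1sub M2sub XZY1 (same_law_XZv XZY1)).
- by move=> M zn Msub th1 th0 g gE; rewrite /rho (EY_is_cexp true th1 Msub gE).
- move=> M1 zn1 M2 zn2 M1sub M2sub th1 th0 XZY0 XZ1; rewrite /rho.
  by rewrite (EY_identifiable M1sub M2sub XZY0 XZ1)
             (EY_identifiable M1sub M2sub XZY0 (same_law_XZv XZY0)).
- move=> M zn Msub th th0 g h b gE hE bE.
  have gE0 := is_cexp_regime (d' := false) (th' := th0) Msub gE.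
  have hE' := is_cexp_tower (W := Xv M false th0) (U := Zv M zn false th0) gE0 hE.
  by have := is_cexp_ae_eq (measurable_Xv M false th0) bE hE'.
- move=> M1 zn1 M2 zn2 M1sub M2sub th th0 b1 b2 XZY1 XZ0 b1E b2E.
  have b2E1 : is_cexp (Pr M1) (Yv M1 false th0) (Xv M1 false th0) b2.
    apply: (is_cexp_same_law (measurable_Xv M1 false th0) (measurable_Xv M2 false th0)
      (same_law_Xv XZ0) _ b2E) => A mA.
    rewrite -(preimage_pairT (Xv M1 false th0) (Zv M1 zn1 false th0)).
    rewrite -(preimage_pairT (Xv M2 false th0) (Zv M2 zn2 false th0)).
    exact: (integral_Y_identifiable M1sub M2sub XZY1 XZ0 _ (measurableX mA measurableT)).
  by have := is_cexp_ae_eq (measurable_Xv M1 false th0) b1E b2E1.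
Qed.
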